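(* For a liner $X$ the following are equivalent: (1) $X$ is Proclus; (2) $X$ is proaffine and $3$-proregular; (3) for every line $L\subseteq X$ and points $o\in L$, $x\in X\setminus L$, $y\in\overline{L\cup\{x\}}$, the set $\{v\in\overline{ox}:\overline{vy}\cap L=\varnothing\}$ contains at most one point.
   Context: A liner is a set $X$ of points with a family of subsets called lines such that any two distinct points lie in a unique line and every line contains at least two points. For distinct $x,y$, $\overline{xy}$ is the line through them and $\overline{xx}:=\{x\}$. A set is flat if it contains $\overline{xy}$ for all its distinct points; $\overline A$ is the smallest flat containing $A$; the rank $\|A\|$ is the smallest cardinality of $B\subseteq X$ with $A\subseteq\overline B$; a plane is a flat of rank 3. $X$ is Proclus if for every plane $P$, line $L\subseteq P$ and point $x\in P\setminus L$ there is at most one line $\Lambda$ with $x\in\Lambda\subseteq P\setminus L$. $X$ is proaffine if for all $o,x,y\in X$ and $p\in\overline{xy}\setminus\overline{ox}$ there exists $u\in\overline{oy}$ such that $\overline{vp}\cap\overline{ox}\ne\varnothing$ for every $v\in\overline{oy}\setminus\{u\}$. $X$ is $3$-proregular if for every set $A\subseteq X$ with $|A|<3$ and all points $o\in\overline A$, $p\in X\setminus\overline A$ with $\overline{op}\ne\{o,p\}$, we have $\overline{\{p\}\cup A}=\bigcup_{u\in\overline{op}}\bigcup_{a\in\overline A}\overline{ua}$. *)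

From Stdlib Require Import List.
Import ListNotations.

Section Liner.
Variable X : Type.
Variable Lines : (X -> Prop) -> Prop.

Definition set_eq (A B : X -> Prop) : Prop := forall z, A z <-> B z.
Definition subset (A B : X -> Prop) : Prop := forall z, A z -> B z.

Definition is_liner : Prop :=
  (forall L, Lines L -> exists a b, a <> b /\ L a /\ L b) /\
  (forall x y, x <> y -> exists L, Lines L /\ L x /\ L y) /\
  (forall x y L1 L2, x <> y -> Lines L1 -> Lines L2 ->
     L1 x -> L1 y -> L2 x -> L2 y -> set_eq L1 L2).

(* line through x and y; {x} when x = y *)
Definition line_through (x y : X) : X -> Prop := fun z =>
  (x = y /\ z = x) \/ (x <> y /\ exists L, Lines L /\ L x /\ L y /\ L z).

Definition flat (A : X -> Prop) : Prop :=
  forall x y, A x -> A y -> subset (line_through x y) A.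

Definition hull (A : X -> Prop) : X -> Prop := fun z =>
  forall F, flat F -> subset A F -> F z.

Definition of_list (B : list X) : X -> Prop := fun z => In z B.

Definition rank_le (A : X -> Prop) (n : nat) : Prop :=
  exists B : list X, length B <= n /\ subset A (hull (of_list B)).

Definition rank_eq (A : X -> Prop) (n : nat) : Prop :=
  rank_le A n /\ forall m, m < n -> ~ rank_le A m.

Definition is_plane (P : X -> Prop) : Prop := flat P /\ rank_eq P 3.

Definition Proclus : Prop :=
  forall P L x, is_plane P -> Lines L -> subset L P -> P x -> ~ L x ->
  forall Λ1 Λ2, Lines Λ1 -> Lines Λ2 ->
    Λ1 x -> subset Λ1 (fun z => P z /\ ~ L z) ->
    Λ2 x -> subset Λ2 (fun z => P z /\ ~ L z) ->
    set_eq Λ1 Λ2.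

Definition proaffine : Prop :=
  forall o x y p, line_through x y p -> ~ line_through o x p ->
  exists u, line_through o y u /\
    forall v, line_through o y v -> v <> u ->
      exists w, line_through v p w /\ line_through o x w.

(* 3-proregular: sets A with |A| < 3 are represented by lists of length <= 2 *)
Definition proregular3 : Prop :=
  forall (A : list X) o p, length A < 3 ->
    hull (of_list A) o -> ~ hull (of_list A) p ->
    ~ set_eq (line_through o p) (fun z => z = o \/ z = p) ->
    set_eq (hull (fun z => z = p \/ In z A))
           (fun z => exists u a, line_through o p u /\ hull (of_list A) a /\
                                 line_through u a z).

Definition condition3 : Prop :=
  forall L o x y, Lines L -> L o -> ~ L x ->
    hull (fun z => L z \/ z = x) y ->
    forall v1 v2,
      (line_through o x v1 /\ ~ exists w, line_through v1 y w /\ L w) ->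
      (line_through o x v2 /\ ~ exists w, line_through v2 y w /\ L w) ->
      v1 = v2.

End Liner.

From Stdlib Require Import List Classical Lia.
Import ListNotations.

(* Call v a miss of y with respect to L when the line vy avoids L; condition (3) says that
   a line ox with o in L carries at most one miss of y.  Under Proclus' axiom two misses
   v1, v2 would give two parallels v1y, v2y to L through y in the plane spanned by L and x.
   Condition (3) gives proaffinity by applying it to the line ox inside the plane of x, y, p,
   and gives 3-proregularity because, on a thick line op, every point but at most one joins
   a point z of the plane to the base line.  Conversely, 3-proregularity yields an exchange
   lemma: any noncollinear triple in a plane spans it.  This lets (3) be applied with other
   base lines of the plane, which forces two parallels through x to coincide.  Finally,
   3-proregularity puts y on a line ul with u on ox and l on L, after which proaffinity in
   the plane of o, l, u bounds the misses. *)

Section Liner.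
Variable X : Type.
Variable Lines : (X -> Prop) -> Prop.
Hypothesis liner : is_liner X Lines.

Local Notation line := (line_through X Lines).
Local Notation span := (hull X Lines).
Local Notation is_flat := (flat X Lines).
Local Notation add_point A x := (fun z => A z \/ z = x).

Lemma Lines_two_points L : Lines L -> exists a b, a <> b /\ L a /\ L b.
Proof. exact (proj1 liner L). Qed.

Lemma Lines_through x y : x <> y -> exists L, Lines L /\ L x /\ L y.
Proof. exact (proj1 (proj2 liner) x y). Qed.

Lemma Lines_unique x y L1 L2 : x <> y -> Lines L1 -> Lines L2 ->
  L1 x -> L1 y -> L2 x -> L2 y -> forall z, L1 z <-> L2 z.
Proof. exact (proj2 (proj2 liner) x y L1 L2). Qed.

Lemma line_diag a z : line a a z <-> z = a.
Proof.
  split.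
  - intros [[_ Hz] | [Hne _]]; [exact Hz | congruence].
  - intros ->; left; auto.
Qed.

Lemma line_neq x y z : x <> y ->
  (line x y z <-> exists L, Lines L /\ L x /\ L y /\ L z).
Proof.
  intros Hxy; split.
  - intros [[Heq _] | [_ HL]]; [congruence | exact HL].
  - intros HL; right; auto.
Qed.

Lemma Lines_line L x y : Lines L -> L x -> L y -> x <> y ->
  forall z, L z <-> line x y z.
Proof.
  intros HL Hx Hy Hxy z; rewrite line_neq by exact Hxy; split.
  - intros Hz; exists L; auto.
  - intros (L' & HL' & Hx' & Hy' & Hz'). apply (Lines_unique x y L' L); auto.
Qed.

Lemma Lines_line_sub L p q z : Lines L -> L p -> L q -> line p q z -> L z.
Proof.
  intros HL Hp Hq Hz. destruct (classic (p = q)) as [<- | Hpq].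
  - apply line_diag in Hz; subst; exact Hp.
  - apply (Lines_line L p q); auto.
Qed.

Lemma Lines_flat L : Lines L -> is_flat L.
Proof. intros HL x y Hx Hy z. exact (Lines_line_sub L x y z HL Hx Hy). Qed.

Lemma line_Lines x y : x <> y -> exists L, Lines L /\ forall z, L z <-> line x y z.
Proof.
  intros Hxy. destruct (Lines_through x y Hxy) as (L & HL & Hx & Hy).
  exists L; split; [exact HL | exact (Lines_line L x y HL Hx Hy Hxy)].
Qed.

Lemma line_l x y : line x y x.
Proof.
  destruct (classic (x = y)) as [<- | Hxy]; [apply line_diag; reflexivity |].
  destruct (Lines_through x y Hxy) as (L & HL & Hx & Hy).
  apply line_neq; [exact Hxy | exists L; auto].
Qed.

Lemma line_r x y : line x y y.
Proof.
  destruct (classic (x = y)) as [<- | Hxy]; [apply line_diag; reflexivity |].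
  destruct (Lines_through x y Hxy) as (L & HL & Hx & Hy).
  apply line_neq; [exact Hxy | exists L; auto].
Qed.

Lemma line_sym x y z : line x y z -> line y x z.
Proof.
  destruct (classic (x = y)) as [<- | Hxy]; [auto |].
  rewrite !line_neq by auto. intros (L & ?); exists L; tauto.
Qed.

Lemma line_two_points x y a b : x <> y -> line x y a -> line x y b -> a <> b ->
  forall z, line a b z <-> line x y z.
Proof.
  intros Hxy Ha Hb Hab z.
  destruct (line_Lines x y Hxy) as (L & HL & HLe).
  rewrite <- HLe. symmetry. apply Lines_line; auto; apply HLe; auto.
Qed.

Lemma line_flat x y : is_flat (line x y).
Proof.
  intros a b Ha Hb z Hz. destruct (classic (x = y)) as [<- | Hxy].
  - apply line_diag in Ha, Hb; subst. exact Hz.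
  - destruct (classic (a = b)) as [<- | Hab].
    + apply line_diag in Hz; subst; exact Ha.
    + apply (line_two_points x y a b); auto.
Qed.

Lemma span_sub A z : A z -> span A z.
Proof. intros Hz F _ HAF. exact (HAF z Hz). Qed.

Lemma span_min A F : is_flat F -> subset X A F -> forall z, span A z -> F z.
Proof. intros HF HAF z Hz. exact (Hz F HF HAF). Qed.

Lemma span_flat A : is_flat (span A).
Proof. intros x y Hx Hy z Hz F HF HAF. exact (HF x y (Hx F HF HAF) (Hy F HF HAF) z Hz). Qed.

Lemma span_line A x y z : span A x -> span A y -> line x y z -> span A z.
Proof. exact (fun Hx Hy => span_flat A x y Hx Hy z). Qed.

Lemma span_mono (A B : X -> Prop) : (forall z, A z -> B z) ->
  forall z, span A z -> span B z.
Proof.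
  intros HAB. apply span_min; [apply span_flat |].
  intros z Hz; apply span_sub; exact (HAB z Hz).
Qed.

Lemma span_nil z : ~ span (of_list X []) z.
Proof. intros Hz. apply (span_min _ (fun _ => False)) in Hz; [exact Hz | intros x y [] | intros w []]. Qed.

Lemma flat_point a : is_flat (fun w => w = a).
Proof. intros x y -> -> z Hz. apply line_diag in Hz; exact Hz. Qed.

Lemma span_single a z : span (of_list X [a]) z -> z = a.
Proof. apply (span_min _ (fun w => w = a)); [apply flat_point | intros w [<- | []]; reflexivity]. Qed.

Lemma span_pair a b z : span (of_list X [a; b]) z <-> line a b z.
Proof.
  split.
  - apply span_min; [apply line_flat |].
    intros w [<- | [<- | []]]; [apply line_l | apply line_r].
  - intros Hz. apply (span_line _ a b); auto; apply span_sub; simpl; auto.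
Qed.


Definition thick (o p : X) : Prop := exists q, line o p q /\ q <> o /\ q <> p.

Lemma thick_iff o p : thick o p <-> ~ set_eq X (line o p) (fun z => z = o \/ z = p).
Proof.
  split.
  - intros (q & Hq & Hqo & Hqp) Hs. destruct (proj1 (Hs q) Hq); contradiction.
  - intros Hs. apply NNPP; intros Hn; apply Hs; intros z; split.
    + intros Hz. destruct (classic (z = o)); [left; auto |].
      destruct (classic (z = p)); [right; auto |].
      exfalso; apply Hn; exists z; auto.
    + intros [-> | ->]; [apply line_l | apply line_r].
Qed.

Lemma thin_line_points o p v : ~ thick o p -> line o p v -> v = o \/ v = p.
Proof.
  intros Hth Hv. destruct (classic (v = o)); [left; auto |].
  destruct (classic (v = p)); [right; auto |].
  exfalso; apply Hth; exists v; auto.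
Qed.

Lemma flat_add_point K c : is_flat K -> (forall o, K o -> ~ thick o c) ->
  is_flat (add_point K c).
Proof.
  intros HK Hth x y [Hx | ->] [Hy | ->] w Hw.
  - left; exact (HK x y Hx Hy w Hw).
  - destruct (thin_line_points x c w (Hth x Hx) Hw) as [-> | ->]; auto.
  - destruct (thin_line_points y c w (Hth y Hy) (line_sym _ _ _ Hw)) as [-> | ->]; auto.
  - right; apply line_diag, Hw.
Qed.

Definition triple (a b c : X) : X -> Prop := fun z => z = a \/ z = b \/ z = c.

Definition noncollinear (p q r : X) : Prop := p <> q /\ ~ line p q r.

Lemma noncollinear_swap12 p q r : noncollinear p q r -> noncollinear q p r.
Proof. intros [Hpq Hr]; split; auto. intros H; apply Hr, line_sym, H. Qed.

Lemma noncollinear_swap23 p q r : noncollinear p q r -> noncollinear p r q.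
Proof.
  intros [Hpq Hr].
  assert (Hpr : p <> r) by (intros <-; apply Hr, line_l).
  split; [exact Hpr |]. intros Hq; apply Hr.
  apply (line_two_points p r p q Hpr (line_l _ _) Hq Hpq), line_r.
Qed.

Lemma noncollinear_not_on_line a b c p q : noncollinear a b c ->
  line p q a -> line p q b -> ~ line p q c.
Proof.
  intros [Hab Hc] Ha Hb Hc'. destruct (classic (p = q)) as [<- | Hpq].
  - apply line_diag in Ha, Hb; congruence.
  - apply Hc, (line_two_points p q a b); auto.
Qed.

Lemma Lines_noncollinear L p q x : Lines L -> L p -> L q -> p <> q -> ~ L x ->
  noncollinear p q x.
Proof. intros HL Hp Hq Hpq Hx; split; [exact Hpq |]. intros H; apply Hx, (Lines_line L p q); auto. Qed.

Lemma span_line_point L p q r : Lines L -> L p -> L q -> p <> q ->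
  forall z, span (add_point L r) z <-> span (triple p q r) z.
Proof.
  intros HL Hp Hq Hpq z; split.
  - apply span_min; [apply span_flat |]. intros w [Hw | ->].
    + apply (span_line _ p q); try (apply span_sub; unfold triple; auto).
      apply (Lines_line L p q); auto.
    + apply span_sub; unfold triple; auto.
  - apply span_mono. intros w [-> | [-> | ->]]; auto.
Qed.

Lemma exchange_thin a b c z : span (triple a b c) z -> ~ line a b z ->
  (forall o, line a b o -> ~ thick o c) -> z = c.
Proof.
  intros Hz Hzn Hth.
  assert (Hf : is_flat (add_point (line a b) c))
    by (apply flat_add_point; [apply line_flat | exact Hth]).
  destruct (span_min (triple a b c) _ Hf) with z as [Hab | ->]; auto; [| contradiction].
  intros w [-> | [-> | ->]]; auto; left; [apply line_l | apply line_r].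
Qed.

Lemma span_list2_collinear (x0 : X) (B : list X) : length B <= 2 ->
  exists p q, forall z, span (of_list X B) z -> line p q z.
Proof.
  intros Hlen. destruct B as [| a [| b [| c B]]].
  - exists x0, x0; intros z Hz; destruct (span_nil z Hz).
  - exists a, a; intros z Hz; apply span_single in Hz; subst; apply line_l.
  - exists a, b; intros z; apply span_pair.
  - simpl in Hlen; lia.
Qed.

Lemma span_list3_cases (x0 : X) (B : list X) : length B <= 3 ->
  (exists p q, forall z, span (of_list X B) z -> line p q z) \/
  (exists a b c, noncollinear a b c /\
     forall z, span (of_list X B) z -> span (triple a b c) z).
Proof.
  intros Hlen. destruct B as [| a [| b [| c [| d B]]]]; try (simpl in Hlen; lia);
    try (left; apply span_list2_collinear; simpl; auto; lia).
  destruct (classic (a = b)) as [<- | Hab].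
  - left; exists a, c. apply span_min; [apply line_flat |].
    intros w [<- | [<- | [<- | []]]]; [apply line_l | apply line_l | apply line_r].
  - destruct (classic (line a b c)) as [Hc | Hc].
    + left; exists a, b. apply span_min; [apply line_flat |].
      intros w [<- | [<- | [<- | []]]]; [apply line_l | apply line_r | exact Hc].
    + right; exists a, b, c; split; [split; auto |].
      apply span_mono. intros w [<- | [<- | [<- | []]]]; unfold triple; auto.
Qed.

Lemma plane_span_line_point L x : Lines L -> ~ L x ->
  is_plane X Lines (span (add_point L x)).
Proof.
  intros HL Hx. destruct (Lines_two_points L HL) as (l1 & l2 & Hl12 & Hl1 & Hl2).
  pose proof (Lines_noncollinear L l1 l2 x HL Hl1 Hl2 Hl12 Hx) as Hnc.
  split; [apply span_flat | split].
  - exists [l1; l2; x]; split; [simpl; lia |]. intros z Hz.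
    apply (proj1 (span_line_point L l1 l2 x HL Hl1 Hl2 Hl12 z)) in Hz.
    revert z Hz; apply span_mono. intros w [-> | [-> | ->]]; simpl; auto.
  - intros m Hm (B & HB & Hsub).
    destruct (span_list2_collinear x B ltac:(lia)) as (p & q & Hpq).
    apply (noncollinear_not_on_line l1 l2 x p q Hnc); apply Hpq, Hsub, span_sub; auto.
Qed.

Lemma parallel_line_thick L x K : Lines L -> ~ L x -> Lines K -> K x ->
  (forall z, K z -> span (add_point L x) z /\ ~ L z) -> exists o, L o /\ thick o x.
Proof.
  intros HL Hx HK HKx HKsub. apply NNPP; intros Hno.
  assert (Hflat : is_flat (add_point L x)).
  { apply flat_add_point; [apply Lines_flat, HL |]. intros o Ho Hth; apply Hno; exists o; auto. }
  assert (HKx' : forall z, K z -> z = x).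
  { intros z Hz. destruct (HKsub z Hz) as [HzP HzL].
    destruct (span_min _ _ Hflat (fun w Hw => Hw) z HzP); tauto. }
  destruct (Lines_two_points K HK) as (a & b & Hab & Ha & Hb).
  apply Hab; rewrite (HKx' a Ha), (HKx' b Hb); reflexivity.
Qed.

Definition misses (v y : X) (L : X -> Prop) : Prop := ~ exists w, line v y w /\ L w.

Lemma misses_sub (K L : X -> Prop) v y : (forall z, K z -> L z) ->
  misses v y L -> misses v y K.
Proof. intros HKL Hm (w & Hw & HKw). apply Hm; exists w; auto. Qed.

Lemma Lines_misses K L p q : Lines K -> K p -> K q -> (forall z, K z -> ~ L z) ->
  misses p q L.
Proof.
  intros HK Hp Hq HKL (w & Hw & HLw). exact (HKL w (Lines_line_sub K p q w HK Hp Hq Hw) HLw).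
Qed.

Lemma misses_l v y L : misses v y L -> ~ L v.
Proof. intros Hm Hv; apply Hm; exists v; split; [apply line_l | exact Hv]. Qed.

Lemma misses_r v y L : misses v y L -> ~ L y.
Proof. intros Hm Hy; apply Hm; exists y; split; [apply line_r | exact Hy]. Qed.


Section Proregular.
Hypothesis proregular : proregular3 X Lines.

Lemma proregular_pair a b o p z : line a b o -> ~ line a b p -> thick o p ->
  span (triple a b p) z -> exists u l, line o p u /\ line a b l /\ line u l z.
Proof.
  intros Ho Hp Hth Hz.
  assert (Hz' : span (fun w => w = p \/ In w [a; b]) z).
  { revert z Hz; apply span_mono. intros w [-> | [-> | ->]]; simpl; auto. }
  destruct (proj1 (proregular [a; b] o p ltac:(simpl; lia) (proj2 (span_pair a b o) Ho)
                     (fun h => Hp (proj1 (span_pair a b p) h)) (proj1 (thick_iff o p) Hth) z) Hz')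
    as (u & l & Hu & Hl & Hul).
  exists u, l; split; [exact Hu | split; [apply span_pair, Hl | exact Hul]].
Qed.

Lemma exchange_thick a b c z o : noncollinear a b c -> span (triple a b c) z ->
  ~ line a b z -> line a b o -> thick o c -> span (triple a b z) c.
Proof.
  intros [Hab Hc] Hz Hzn Ho Hth.
  destruct (proregular_pair a b o c z Ho Hc Hth Hz) as (u & l & Hu & Hl & Hul).
  assert (Hoc : o <> c) by (intros <-; contradiction).
  assert (Huo : u <> o) by (intros ->; exact (Hzn (line_flat a b o l Ho Hl z Hul))).
  assert (Hc_ou : line o u c)
    by (apply (line_two_points o c o u Hoc (line_l _ _) Hu (not_eq_sym Huo)), line_r).
  assert (Hu_ab : ~ line a b u)
    by (intros Hu'; exact (Hc (line_flat a b o u Ho Hu' c Hc_ou))).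
  assert (Hul' : u <> l) by (intros ->; contradiction).
  assert (Hzl : z <> l) by (intros ->; contradiction).
  set (S := span (triple a b z)).
  assert (Sa : S a) by (apply span_sub; unfold triple; auto).
  assert (Sb : S b) by (apply span_sub; unfold triple; auto).
  assert (Sz : S z) by (apply span_sub; unfold triple; auto).
  assert (Su : S u).
  { apply (span_line _ z l); [exact Sz | exact (span_line _ a b l Sa Sb Hl) |].
    apply (line_two_points u l z l Hul' Hul (line_r _ _) Hzl), line_l. }
  exact (span_line _ o u c (span_line _ a b o Sa Sb Ho) Su Hc_ou).
Qed.

Lemma span_triple_exchange a b c z : noncollinear a b c -> span (triple a b c) z ->
  ~ line a b z -> forall w, span (triple a b c) w -> span (triple a b z) w.
Proof.
  intros Hnc Hz Hzn.
  assert (Hc : span (triple a b z) c).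
  { destruct (classic (exists o, line a b o /\ thick o c)) as [(o & Ho & Hth) | Hthin].
    - exact (exchange_thick a b c z o Hnc Hz Hzn Ho Hth).
    - rewrite <- (exchange_thin a b c z Hz Hzn); [apply span_sub; unfold triple; auto |].
      intros o Ho Hth; apply Hthin; exists o; auto. }
  apply span_min; [apply span_flat |].
  intros w [-> | [-> | ->]]; auto; apply span_sub; unfold triple; auto.
Qed.

Lemma span_triple_rebase2 d p q e : noncollinear d p q -> span (triple d p q) e -> e <> d ->
  exists s, noncollinear d e s /\
    forall w, span (triple d p q) w -> span (triple d e s) w.
Proof.
  intros Hnc He Hed. pose proof (noncollinear_swap23 _ _ _ Hnc) as Hnc'.
  destruct (classic (line d p e)) as [Hdp | Hdp].
  - assert (Hdq : ~ line d q e).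
    { intros Hdq. apply (noncollinear_not_on_line d p q d e Hnc (line_l _ _)).
      - apply (line_two_points d p d e (proj1 Hnc) (line_l _ _) Hdp (not_eq_sym Hed)), line_r.
      - apply (line_two_points d q d e (proj1 Hnc') (line_l _ _) Hdq (not_eq_sym Hed)), line_r. }
    exists q; split; [apply noncollinear_swap23; split; [exact (proj1 Hnc') | exact Hdq] |].
    intros w Hw. apply (span_mono (triple d q e)); [unfold triple; tauto |].
    assert (Hswap : forall z, span (triple d p q) z -> span (triple d q p) z)
      by (apply span_mono; unfold triple; tauto).
    apply (span_triple_exchange d q p e Hnc' (Hswap e He) Hdq), Hswap, Hw.
  - exists p; split; [apply noncollinear_swap23; split; [exact (proj1 Hnc) | exact Hdp] |].
    intros w Hw. apply (span_mono (triple d p e)); [unfold triple; tauto |].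
    exact (span_triple_exchange d p q e Hnc He Hdp w Hw).
Qed.

Lemma span_triple_rebase1 a b c d : noncollinear a b c -> span (triple a b c) d ->
  exists p q, noncollinear d p q /\
    forall w, span (triple a b c) w -> span (triple d p q) w.
Proof.
  intros Hnc Hd. destruct (classic (d = a)) as [-> | Hda]; [exists b, c; auto |].
  destruct (span_triple_rebase2 a b c d Hnc Hd Hda) as (s & Hs & Hsub).
  exists a, s; split; [exact (noncollinear_swap12 _ _ _ Hs) |].
  intros w Hw. apply (span_mono (triple a d s)); [unfold triple; tauto | exact (Hsub w Hw)].
Qed.

Lemma span_triple_sub a b c d e f : noncollinear a b c ->
  span (triple a b c) d -> span (triple a b c) e -> span (triple a b c) f ->
  noncollinear d e f -> forall w, span (triple a b c) w -> span (triple d e f) w.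
Proof.
  intros Hnc Hd He Hf Hdef w Hw.
  destruct (span_triple_rebase1 a b c d Hnc Hd) as (p & q & Hpq & Hsub1).
  destruct (span_triple_rebase2 d p q e Hpq (Hsub1 e He) (not_eq_sym (proj1 Hdef))) as (s & Hs & Hsub2).
  apply (span_triple_exchange d e s f Hs (Hsub2 f (Hsub1 f Hf)) (proj2 Hdef)).
  exact (Hsub2 w (Hsub1 w Hw)).
Qed.

Lemma plane_rebase L x K p : Lines L -> ~ L x -> Lines K ->
  (forall z, K z -> span (add_point L x) z) -> span (add_point L x) p -> ~ K p ->
  forall z, span (add_point L x) z -> span (add_point K p) z.
Proof.
  intros HL Hx HK HKsub Hp HKp z Hz.
  destruct (Lines_two_points L HL) as (l1 & l2 & Hl12 & Hl1 & Hl2).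
  destruct (Lines_two_points K HK) as (k1 & k2 & Hk12 & Hk1 & Hk2).
  pose proof (fun w => proj1 (span_line_point L l1 l2 x HL Hl1 Hl2 Hl12 w)) as EL.
  apply (proj2 (span_line_point K k1 k2 p HK Hk1 Hk2 Hk12 z)).
  apply (span_triple_sub l1 l2 x).
  - exact (Lines_noncollinear L l1 l2 x HL Hl1 Hl2 Hl12 Hx).
  - apply EL, HKsub, Hk1.
  - apply EL, HKsub, Hk2.
  - apply EL, Hp.
  - exact (Lines_noncollinear K k1 k2 p HK Hk1 Hk2 Hk12 HKp).
  - apply EL, Hz.
Qed.

Lemma plane_sub_span_line_point P L x : is_plane X Lines P -> Lines L ->
  subset X L P -> P x -> ~ L x -> forall z, P z -> span (add_point L x) z.
Proof.
  intros [_ [(B & HB & HPB) _]] HL HLP HPx Hx z Hz.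
  destruct (Lines_two_points L HL) as (l1 & l2 & Hl12 & Hl1 & Hl2).
  pose proof (Lines_noncollinear L l1 l2 x HL Hl1 Hl2 Hl12 Hx) as Hnc.
  destruct (span_list3_cases x B HB) as [(p & q & Hpq) | (a & b & c & Habc & Hsub)].
  - exfalso. apply (noncollinear_not_on_line l1 l2 x p q Hnc); apply Hpq, HPB; auto.
  - apply (proj2 (span_line_point L l1 l2 x HL Hl1 Hl2 Hl12 z)).
    apply (span_triple_sub a b c); auto.
Qed.

(* With o in L and w a third point of the thick line ox, condition (3) is applied three
   times: in the plane of L and x it makes wa meet L; rebased on L2 and o it makes some line
   through a meet both L and L2, at m and c; rebased on L and a it then forces a = c. *)
Lemma parallel_sub (condition : condition3 X Lines) L x L1 L2 a :
  Lines L -> ~ L x -> Lines L1 -> Lines L2 -> L1 x -> L2 x ->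
  (forall z, L1 z -> span (add_point L x) z /\ ~ L z) ->
  (forall z, L2 z -> span (add_point L x) z /\ ~ L z) -> L1 a -> L2 a.
Proof.
  intros HL Hx HL1 HL2 H1x H2x H1 H2 Ha. apply NNPP; intros Hna.
  assert (H1L : forall z, L1 z -> ~ L z) by (intros z Hz; apply (H1 z Hz)).
  assert (H2L : forall z, L2 z -> ~ L z) by (intros z Hz; apply (H2 z Hz)).
  destruct (H1 a Ha) as [HaP HaL].
  destruct (parallel_line_thick L x L1 HL Hx HL1 H1x H1) as (o & Ho & w & Hw & Hwo & Hwx).
  assert (Hox : o <> x) by (intros ->; contradiction).
  assert (Hwa : w <> a).
  { intros ->. apply (H1L o); [| exact Ho]. apply (Lines_line_sub L1 x a o HL1 H1x Ha).
    apply (line_two_points o x x a Hox (line_r _ _) Hw (not_eq_sym Hwx)), line_l. }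
  assert (Hmeet_wa : exists l, L l /\ line w a l).
  { apply NNPP; intros Hn. apply Hwx; symmetry.
    apply (condition L o x a HL Ho Hx HaP x w).
    - split; [apply line_r | exact (Lines_misses L1 L x a HL1 H1x Ha H1L)].
    - split; [exact Hw | intros (l & Hl1 & Hl2); apply Hn; exists l; auto]. }
  destruct Hmeet_wa as (l & Hl & Hwal).
  assert (Hla : l <> a) by (intros ->; contradiction).
  assert (Hmeet_a : exists m c, L m /\ L2 c /\ line m a c).
  { apply NNPP; intros Hn. apply Hwo; symmetry.
    assert (Hon : ~ L2 o) by (intros H; exact (H2L o H Ho)).
    pose proof (plane_rebase L x L2 o HL Hx HL2 (fun z Hz => proj1 (H2 z Hz))
                  (span_sub _ o (or_introl Ho)) Hon a HaP) as Ha2.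
    apply (condition L2 x o a HL2 H2x Hon Ha2 o w).
    - split; [apply line_r | intros (c & Hc1 & Hc2); apply Hn; exists o, c; auto].
    - split; [apply line_sym, Hw |]. intros (c & Hc1 & Hc2); apply Hn; exists l, c.
      repeat split; auto. apply (line_two_points w a l a Hwa Hwal (line_r _ _) Hla), Hc1. }
  destruct Hmeet_a as (m & c & Hm & Hc & Hmac).
  pose proof (plane_rebase L x L a HL Hx HL (fun z Hz => span_sub _ z (or_introl Hz))
                HaP HaL x (span_sub _ x (or_intror eq_refl))) as Hxa.
  apply Hna. replace a with c; [exact Hc |]. symmetry.
  apply (condition L m a x HL Hm HaL Hxa a c).
  - split; [apply line_r | exact (Lines_misses L1 L a x HL1 Ha H1x H1L)].
  - split; [exact Hmac | exact (Lines_misses L2 L c x HL2 Hc H2x H2L)].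
Qed.


End Proregular.

Lemma proregular3_condition3_Proclus :
  proregular3 X Lines -> condition3 X Lines -> Proclus X Lines.
Proof.
  intros PR C P L x HP HL HLP HPx Hx L1 L2 HL1 HL2 H1x H1 H2x H2.
  pose proof (plane_sub_span_line_point PR P L x HP HL HLP HPx Hx) as HPsub.
  assert (Hin : forall K, subset X K (fun z => P z /\ ~ L z) ->
                  forall z, K z -> span (add_point L x) z /\ ~ L z)
    by (intros K HK z Hz; destruct (HK z Hz); auto).
  intros z; split; apply (parallel_sub PR C L x); auto; apply Hin; assumption.
Qed.

Lemma proaffine_iff_unique_miss : proaffine X Lines <->
  forall o x y p, line x y p -> ~ line o x p -> forall v1 v2,
    line o y v1 -> line o y v2 -> misses v1 p (line o x) -> misses v2 p (line o x) -> v1 = v2.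
Proof.
  split.
  - intros PA o x y p Hp Hnp v1 v2 Hv1 Hv2 Hm1 Hm2.
    destruct (PA o x y p Hp Hnp) as (u & _ & Hu).
    assert (Hv : forall v, line o y v -> misses v p (line o x) -> v = u)
      by (intros v Hv Hm; apply NNPP; intros Hvu; exact (Hm (Hu v Hv Hvu))).
    rewrite (Hv v1), (Hv v2); auto.
  - intros U o x y p Hp Hnp.
    destruct (classic (exists u, line o y u /\ misses u p (line o x))) as [(u & Hu & Hm) | Hno].
    + exists u; split; [exact Hu |]. intros v Hv Hvu. apply NNPP; intros Hn.
      exact (Hvu (U o x y p Hp Hnp v u Hv Hu Hn Hm)).
    + exists o; split; [apply line_l |]. intros v Hv _. apply NNPP; intros Hn.
      apply Hno; exists v; auto.
Qed.

Lemma condition3_proaffine : condition3 X Lines -> proaffine X Lines.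
Proof.
  intros C. apply proaffine_iff_unique_miss.
  intros o x y p Hp Hnp v1 v2 Hv1 Hv2 Hm1 Hm2.
  assert (Hxy : x <> y) by (intros <-; apply line_diag in Hp; subst; apply Hnp, line_r).
  destruct (classic (o = x)) as [<- | Hox].
  - assert (Hv : forall v, line o y v -> misses v p (line o o) -> v = p).
    { intros v Hv Hm. apply NNPP; intros Hvp. apply Hm; exists o.
      split; [| apply line_diag; reflexivity].
      apply (line_two_points o y v p Hxy Hv Hp Hvp), line_l. }
    rewrite (Hv v1), (Hv v2); auto.
  - destruct (line_Lines o x Hox) as (K & HK & HKe).
    assert (HKox : forall z, K z -> line o x z) by (intros z; apply HKe).
    apply (C K o y p HK (proj2 (HKe o) (line_l _ _))).
    + intros Hy. apply Hnp, (line_two_points o x x y Hox (line_r _ _) (HKox y Hy) Hxy), Hp.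
    + apply (span_line _ x y); [| | exact Hp]; apply span_sub; [left | right; reflexivity].
      apply HKe, line_r.
    + split; [exact Hv1 | exact (misses_sub K (line o x) v1 p HKox Hm1)].
    + split; [exact Hv2 | exact (misses_sub K (line o x) v2 p HKox Hm2)].
Qed.

Lemma span_join_point (A : list X) o p u a z : span (of_list X A) o -> line o p u ->
  span (of_list X A) a -> line u a z -> span (fun w => w = p \/ In w A) z.
Proof.
  intros Ho Hu Ha Hz.
  assert (HA : forall w, span (of_list X A) w -> span (fun w => w = p \/ In w A) w)
    by (apply span_mono; intros w Hw; right; exact Hw).
  apply (span_line _ u a); [| exact (HA a Ha) | exact Hz].
  apply (span_line _ o p); [exact (HA o Ho) | apply span_sub; left; reflexivity | exact Hu].
Qed.

Lemma span_join_point_degenerate (A : list X) o p z : (forall w, In w A -> w = o) ->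
  span (fun w => w = p \/ In w A) z -> line o p z.
Proof.
  intros HA. apply span_min; [apply line_flat |].
  intros w [-> | Hw]; [apply line_r | rewrite (HA w Hw); apply line_l].
Qed.

Lemma condition3_join_line (C : condition3 X Lines) K o p z : Lines K -> K o -> ~ K p ->
  thick o p -> span (add_point K p) z -> exists u l, line o p u /\ K l /\ line u l z.
Proof.
  intros HK Ho Hp (q & Hq & Hqo & Hqp) Hz.
  destruct (classic (line o p z)) as [Hopz | Hopz]; [exists z, o; auto using line_l |].
  assert (Hpo : p <> o) by (intros ->; contradiction).
  assert (Hmeet : exists v w, line o p v /\ v <> o /\ line v z w /\ K w).
  { apply NNPP; intros Hn. apply Hqp.
    apply (C K o p z HK Ho Hp Hz q p).
    - split; [exact Hq |]. intros (w & Hw & HKw); apply Hn; exists q, w; auto.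
    - split; [apply line_r |]. intros (w & Hw & HKw); apply Hn; exists p, w; auto using line_r. }
  destruct Hmeet as (v & w & Hv & Hvo & Hw & HKw).
  assert (Hvz : v <> z) by (intros ->; contradiction).
  assert (Hvw : v <> w).
  { intros <-. apply Hp, (Lines_line_sub K o v); auto.
    apply (line_two_points o p o v (not_eq_sym Hpo) (line_l _ _) Hv (not_eq_sym Hvo)), line_r. }
  exists v, w; split; [exact Hv | split; [exact HKw |]].
  apply (line_two_points v z v w Hvz (line_l _ _) Hw Hvw), line_r.
Qed.

Lemma condition3_proregular3 : condition3 X Lines -> proregular3 X Lines.
Proof.
  intros C A o p HA Ho Hp Hnp z; split.
  2: { intros (u & a & Hu & Ha & Hz). exact (span_join_point A o p u a z Ho Hu Ha Hz). }
  intros Hz. apply thick_iff in Hnp.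
  assert (Hdeg : (forall w, In w A -> w = o) ->
                 exists u a, line o p u /\ span (of_list X A) a /\ line u a z).
  { intros HAo; exists z, o.
    split; [exact (span_join_point_degenerate A o p z HAo Hz) | split; [exact Ho | apply line_l]]. }
  destruct A as [| a [| b [| c A']]]; try (simpl in HA; lia).
  - destruct (span_nil o Ho).
  - apply Hdeg. apply span_single in Ho. intros w [<- | []]; auto.
  - rewrite span_pair in Ho, Hp. destruct (classic (a = b)) as [<- | Hab].
    + apply line_diag in Ho; subst. apply Hdeg; intros w [<- | [<- | []]]; reflexivity.
    + destruct (line_Lines a b Hab) as (K & HK & HKe).
      assert (HpK : ~ K p) by (intros H; apply Hp, HKe, H).
      assert (HzK : span (add_point K p) z).
      { revert Hz; apply span_mono. intros w [-> | [<- | [<- | []]]]; [right | left | left];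
          [reflexivity | apply HKe, line_l | apply HKe, line_r]. }
      destruct (condition3_join_line C K o p z HK (proj2 (HKe o) Ho) HpK Hnp HzK)
        as (u & l & Hu & Hl & Hul).
      exists u, l; split; [exact Hu | split; [rewrite span_pair; apply HKe, Hl | exact Hul]].
Qed.

Lemma proaffine_proregular3_condition3 :
  proaffine X Lines -> proregular3 X Lines -> condition3 X Lines.
Proof.
  intros PA PR L o x y HL Ho Hx Hy v1 v2 [Hv1 Hm1] [Hv2 Hm2].
  destruct (classic (thick o x)) as [Hth | Hthin].
  2: { assert (Hv : forall v, line o x v -> misses v y L -> v = x).
       { intros v Hv Hm. destruct (thin_line_points o x v Hthin Hv) as [-> | ->]; [| reflexivity].
         contradiction (misses_l _ _ _ Hm Ho). }
       rewrite (Hv v1), (Hv v2); auto. }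
  destruct (Lines_two_points L HL) as (l1 & l2 & Hl12 & Hl1 & Hl2).
  pose proof (Lines_line L l1 l2 HL Hl1 Hl2 Hl12) as HLe.
  destruct (proregular_pair PR l1 l2 o x y) as (u & l & Hu & Hl & Hul).
  - apply HLe, Ho.
  - intros H; apply Hx, HLe, H.
  - exact Hth.
  - apply (proj1 (span_line_point L l1 l2 x HL Hl1 Hl2 Hl12 y)), Hy.
  - apply HLe in Hl.
    assert (HolL : forall z, line o l z -> L z) by (intros z; apply (Lines_line_sub L o l z HL Ho Hl)).
    assert (Hy_ol : ~ line o l y) by (intros H; exact (misses_r _ _ _ Hm1 (HolL y H))).
    assert (Huo : u <> o) by (intros ->; exact (Hy_ol Hul)).
    assert (Hox : o <> x) by (intros ->; contradiction).
    pose proof (line_two_points o x o u Hox (line_l _ _) Hu (not_eq_sym Huo)) as Hou.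
    apply (proj1 proaffine_iff_unique_miss PA o l u y (line_sym _ _ _ Hul) Hy_ol).
    + apply Hou, Hv1.
    + apply Hou, Hv2.
    + exact (misses_sub _ _ v1 y HolL Hm1).
    + exact (misses_sub _ _ v2 y HolL Hm2).
Qed.

Lemma Proclus_condition3 : Proclus X Lines -> condition3 X Lines.
Proof.
  intros Pr L o x y HL Ho Hx Hy v1 v2 [Hv1 Hm1] [Hv2 Hm2].
  apply NNPP; intros Hne.
  assert (Hox : o <> x) by (intros ->; contradiction).
  (* The line through a missing point v and y cannot contain a second point v' of ox:
     it would be the line ox, which contains o in L. *)
  assert (Hnot : forall v v', line o x v -> line o x v' -> v <> v' -> misses v y L ->
                   ~ line v y v').
  { intros v v' Hv Hv' Hvv' Hm Hyv'.
    assert (Hvy : v <> y) by (intros <-; apply line_diag in Hyv'; congruence).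
    apply Hm; exists o; split; [| exact Ho].
    apply (line_two_points v y v v' Hvy (line_l _ _) Hyv' Hvv').
    apply (line_two_points o x v v' Hox Hv Hv' Hvv'), line_l. }
  destruct (classic (v1 = y)) as [-> | Hv1y].
  { exact (Hnot v2 y Hv2 Hv1 (not_eq_sym Hne) Hm2 (line_r _ _)). }
  destruct (classic (v2 = y)) as [-> | Hv2y].
  { exact (Hnot v1 y Hv1 Hv2 Hne Hm1 (line_r _ _)). }
  set (P := span (add_point L x)).
  assert (HPv : forall v, line o x v -> P v).
  { intros v Hv. apply (span_line _ o x); [| | exact Hv]; apply span_sub; [left; exact Ho | right; reflexivity]. }
  assert (Hpar : forall K v, (forall z, K z <-> line v y z) -> line o x v -> misses v y L ->
                   subset X K (fun z => P z /\ ~ L z)).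
  { intros K v HKe Hv Hm z Hz. apply HKe in Hz.
    split; [exact (span_line _ v y z (HPv v Hv) Hy Hz) | intros HLz; apply Hm; exists z; auto]. }
  destruct (line_Lines v1 y Hv1y) as (K1 & HK1 & HK1e).
  destruct (line_Lines v2 y Hv2y) as (K2 & HK2 & HK2e).
  assert (HK12 : set_eq X K1 K2).
  { apply (Pr P L y (plane_span_line_point L x HL Hx) HL (fun z Hz => span_sub _ z (or_introl Hz))
             Hy (misses_r _ _ _ Hm1) K1 K2 HK1 HK2).
    - apply HK1e, line_r.
    - exact (Hpar K1 v1 HK1e Hv1 Hm1).
    - apply HK2e, line_r.
    - exact (Hpar K2 v2 HK2e Hv2 Hm2). }
  apply (Hnot v2 v1 Hv2 Hv1 (not_eq_sym Hne) Hm2), HK2e, HK12, HK1e, line_l.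
Qed.

End Liner.

Theorem theorem3p6p1 (X : Type) (Lines : (X -> Prop) -> Prop) :
  is_liner X Lines ->
  (Proclus X Lines <-> (proaffine X Lines /\ proregular3 X Lines)) /\
  ((proaffine X Lines /\ proregular3 X Lines) <-> condition3 X Lines).
Proof.
  intros HL.
  pose proof (Proclus_condition3 X Lines HL) as P_C.
  pose proof (condition3_proaffine X Lines HL) as C_A.
  pose proof (condition3_proregular3 X Lines HL) as C_R.
  pose proof (proaffine_proregular3_condition3 X Lines HL) as AR_C.
  pose proof (proregular3_condition3_Proclus X Lines HL) as RC_P.
  split; split.
  - intros Pr; split; [apply C_A | apply C_R]; apply P_C, Pr.
  - intros [PA PR]; apply (RC_P PR), (AR_C PA PR).
  - intros [PA PR]; apply (AR_C PA PR).
  - intros C; split; [apply C_A | apply C_R]; exact C.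
Qed.
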